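(* Let $T>0$, $0<\eta<T$ and $0<\alpha<\frac{1}{\eta}$. If $y\in C([0,T],[0,\infty))$, then the unique solution $u$ of the problem \[ u''(t)+y(t)=0,\quad t\in(0,T),\qquad u'(0)=0,\quad u(T)=\alpha\int_0^{\eta}u(s)\,ds \] satisfies $u(t)\ge 0$ for all $t\in[0,T]$. *)

From Stdlib Require Import Reals.
From Coquelicot Require Import Coquelicot.
Open Scope R_scope.

Definition cont_on_Icc (f : R -> R) (a b : R) : Prop :=
  forall t, a <= t <= b ->
    filterlim f (within (fun s => a <= s <= b) (locally t)) (locally (f t)).

Definition right_deriv (f : R -> R) (a l : R) : Prop :=
  filterlim (fun h => (f (a + h) - f a) / h) (at_right 0) (locally l).

(* u solves  u'' + y = 0 on (0,T),  u'(0) = 0,  u(T) = alpha * int_0^eta u,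
   with u in C([0,T]), twice differentiable on (0,T), du its derivative there,
   and u'(0) understood as the (one-sided) right derivative. *)
Definition is_solution (T eta alpha : R) (y u du : R -> R) : Prop :=
  cont_on_Icc u 0 T /\
  (forall t, 0 < t < T -> is_derive u t (du t)) /\
  (forall t, 0 < t < T -> is_derive du t (- y t)) /\
  right_deriv u 0 0 /\
  u T = alpha * RInt u 0 eta.

(* Since u'' = -y <= 0, u' is nonincreasing on (0,T); with u'(0) = 0 this gives
   u' <= 0, so u is nonincreasing on [0,T] and u >= u(T) there.  Hence
   u(T) = alpha * int_0^eta u >= alpha * eta * u(T), and alpha * eta < 1 forces
   u(T) >= 0. *)

From Stdlib Require Import Reals Lra.
From Coquelicot Require Import Coquelicot.
Open Scope R_scope.

Lemma cont_on_Icc_eps (f : R -> R) (a b t : R) :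
  cont_on_Icc f a b -> a <= t <= b ->
  forall eps, 0 < eps -> exists delta, 0 < delta /\
    forall s, a <= s <= b -> Rabs (s - t) < delta -> Rabs (f s - f t) < eps.
Proof.
  intros Hf Ht eps Heps.
  destruct (proj1 (filterlim_locally _ _) (Hf t Ht) (mkposreal eps Heps)) as [d Hd].
  exists d; split; [apply cond_pos |].
  intros s Hs Hst; exact (Hd s Hst Hs).
Qed.

Definition clamp (a b x : R) : R := Rmax a (Rmin x b).

Lemma clamp_in (a b x : R) : a <= b -> a <= clamp a b x <= b.
Proof. intros Hab; unfold clamp, Rmax, Rmin; repeat destruct Rle_dec; lra. Qed.

Lemma clamp_id (a b x : R) : a <= x <= b -> clamp a b x = x.
Proof. intros Hx; unfold clamp; rewrite Rmin_left, Rmax_right; lra. Qed.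

Lemma clamp_dist (a b x z : R) :
  a <= z <= b -> Rabs (clamp a b x - z) <= Rabs (x - z).
Proof.
  intros Hz; unfold clamp, Rmax, Rmin, Rabs.
  repeat destruct Rle_dec; repeat destruct Rcase_abs; lra.
Qed.

Lemma continuous_comp_clamp (f : R -> R) (a b z : R) :
  cont_on_Icc f a b -> a <= z <= b -> continuous (fun x => f (clamp a b x)) z.
Proof.
  intros Hf Hz; apply (proj2 (filterlim_locally _ _)); intros eps.
  destruct (cont_on_Icc_eps f a b z Hf Hz eps (cond_pos eps)) as [d [Hd Hfd]].
  exists (mkposreal d Hd); intros x Hx.
  change (Rabs (f (clamp a b x) - f (clamp a b z)) < eps).
  rewrite (clamp_id a b z Hz).
  apply Hfd; [apply clamp_in; lra |].
  eapply Rle_lt_trans; [apply clamp_dist, Hz | exact Hx].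
Qed.

(* A function continuous on [a,b] only from within need not be [continuous] at
   the endpoints; integrate its continuous extension by constants instead. *)
Lemma ex_RInt_cont_on_Icc (f : R -> R) (a b : R) :
  a <= b -> cont_on_Icc f a b -> ex_RInt f a b.
Proof.
  intros Hab Hf.
  apply (ex_RInt_ext (fun x => f (clamp a b x))).
  - intros x Hx; rewrite Rmin_left, Rmax_right in Hx by lra.
    rewrite clamp_id; lra.
  - apply (ex_RInt_continuous (V := R_CompleteNormedModule)); intros z Hz.
    rewrite Rmin_left, Rmax_right in Hz by lra.
    now apply continuous_comp_clamp.
Qed.

Lemma RInt_ge_const (f : R -> R) (a b m : R) :
  a <= b -> ex_RInt f a b -> (forall x, a < x < b -> m <= f x) ->
  (b - a) * m <= RInt f a b.
Proof.
  intros Hab Hf Hm.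
  assert (Hle := RInt_le (fun _ => m) f a b Hab (ex_RInt_const a b m) Hf Hm).
  now rewrite RInt_const in Hle.
Qed.

Lemma deriv_le_slope (f df : R -> R) (a b M : R) :
  (forall x, a < x < b -> is_derive f x (df x)) ->
  (forall x, a < x < b -> df x <= M) ->
  forall s t, a < s -> s <= t -> t < b -> f t - f s <= M * (t - s).
Proof.
  intros Hd HM s t Hs Hst Ht.
  destruct (MVT_gen f s t df) as [c [Hc ->]].
  - intros x Hx; rewrite Rmin_left, Rmax_right in Hx by lra; apply Hd; lra.
  - intros x Hx; rewrite Rmin_left, Rmax_right in Hx by lra.
    apply continuity_pt_filterlim, (ex_derive_continuous (K := R_AbsRing) (V := R_NormedModule)).
    exists (df x); apply Hd; lra.
  - rewrite Rmin_left, Rmax_right in Hc by lra.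
    apply Rmult_le_compat_r; [lra | apply HM; lra].
Qed.

Lemma deriv_ge_slope (f df : R -> R) (a b m : R) :
  (forall x, a < x < b -> is_derive f x (df x)) ->
  (forall x, a < x < b -> m <= df x) ->
  forall s t, a < s -> s <= t -> t < b -> m * (t - s) <= f t - f s.
Proof.
  intros Hd Hm s t Hs Hst Ht.
  enough (- f t - - f s <= - m * (t - s)) by lra.
  apply (deriv_le_slope (fun x => - f x) (fun x => - df x) a b); auto.
  - intros x Hx; apply (is_derive_opp f x (df x)), Hd, Hx.
  - intros x Hx; specialize (Hm x Hx); lra.
Qed.

Lemma nonincreasing_of_deriv_nonpos (f df : R -> R) (a b : R) :
  (forall x, a < x < b -> is_derive f x (df x)) ->
  (forall x, a < x < b -> df x <= 0) ->
  forall s t, a < s -> s <= t -> t < b -> f t <= f s.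
Proof.
  intros Hd Hn s t Hs Hst Ht.
  assert (H := deriv_le_slope f df a b 0 Hd Hn s t Hs Hst Ht); lra.
Qed.

(* Continuity carries monotonicity from (a,b) to [a,b]: approach s from the
   right and t from the left by interior points s' <= t'. *)
Lemma nonincreasing_Icc_of_Ioo (f : R -> R) (a b : R) :
  cont_on_Icc f a b ->
  (forall s t, a < s -> s <= t -> t < b -> f t <= f s) ->
  forall s t, a <= s -> s <= t -> t <= b -> f t <= f s.
Proof.
  intros Hf Hn s t Hs Hst Ht.
  destruct (Req_dec s t) as [-> | Hneq]; [lra |].
  apply Rnot_lt_le; intros Hlt.
  set (e := (f t - f s) / 2).
  destruct (cont_on_Icc_eps f a b s Hf ltac:(lra) e ltac:(unfold e; lra)) as [ds [Hds Hfs]].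
  destruct (cont_on_Icc_eps f a b t Hf ltac:(lra) e ltac:(unfold e; lra)) as [dt [Hdt Hft]].
  set (m := Rmin (Rmin ds dt) (t - s) / 3).
  assert (Hm : 0 < m /\ m < ds /\ m < dt /\ 2 * m < t - s).
  { unfold m, Rmin; repeat destruct Rle_dec; lra. }
  assert (Hs' := Hfs (s + m) ltac:(lra) ltac:(rewrite Rabs_right; lra)).
  assert (Ht' := Hft (t - m) ltac:(lra) ltac:(rewrite Rabs_left; lra)).
  assert (Hst' := Hn (s + m) (t - m) ltac:(lra) ltac:(lra) ltac:(lra)).
  apply Rabs_def2 in Hs', Ht'; unfold e in *; lra.
Qed.

(* Compare the difference quotients over [a, a+h] and [a, a+h/2]: both tend to
   l, while the slope bound on [a+h/2, a+h] keeps (q(h) - q(h/2)/2) above d/2. *)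
Lemma right_deriv_ge_slope (f : R -> R) (a c l d : R) :
  a < c -> right_deriv f a l ->
  (forall s t, a < s -> s <= t -> t < c -> d * (t - s) <= f t - f s) ->
  d <= l.
Proof.
  intros Hac Hl Hslope.
  apply Rnot_lt_le; intros Hld.
  set (e := (d - l) / 3).
  assert (He : 0 < e) by (unfold e; lra).
  destruct (proj1 (filterlim_locally _ _) Hl (mkposreal e He)) as [del Hdel].
  assert (Hq : forall h, 0 < h < del ->
            h * (l - e) < f (a + h) - f a < h * (l + e)).
  { intros h Hh.
    assert (Hb : ball 0 del h) by (change (Rabs (h - 0) < del); rewrite Rabs_right; lra).
    assert (Hq := Hdel h Hb (proj1 Hh)).
    change (Rabs ((f (a + h) - f a) / h - l) < e) in Hq.
    apply Rabs_def2 in Hq.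
    set (q := (f (a + h) - f a) / h) in Hq.
    replace (f (a + h) - f a) with (h * q) by (unfold q; field; lra).
    split; nra. }
  set (h := Rmin del (c - a) / 2).
  assert (Hh : 0 < h < del /\ a + h < c)
    by (assert (Hdel0 := cond_pos del); unfold h, Rmin; destruct Rle_dec; lra).
  assert (Hfull := Hq h ltac:(lra)).
  assert (Hhalf := Hq (h / 2) ltac:(lra)).
  assert (Hsl := Hslope (a + h / 2) (a + h) ltac:(lra) ltac:(lra) ltac:(lra)).
  assert (Hsplit : d * (a + h - (a + h / 2)) = h * (l + e) - h / 2 * (l - e))
    by (unfold e; field).
  lra.
Qed.

Theorem lemma2p2 (T eta alpha : R) (y u du : R -> R) :
  0 < T -> 0 < eta < T -> 0 < alpha < 1 / eta ->
  cont_on_Icc y 0 T -> (forall t, 0 <= t <= T -> 0 <= y t) ->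
  is_solution T eta alpha y u du ->
  forall t, 0 <= t <= T -> 0 <= u t.
Proof.
  intros HT Heta Halpha _ Hy0 [Hu [Hdu [Hddu [Hr HuT]]]].
  assert (du_noninc : forall s t, 0 < s -> s <= t -> t < T -> du t <= du s).
  { apply (nonincreasing_of_deriv_nonpos du (fun x => - y x)); auto.
    intros x Hx; specialize (Hy0 x ltac:(lra)); lra. }
  assert (du_nonpos : forall c, 0 < c < T -> du c <= 0).
  { intros c Hc; apply (right_deriv_ge_slope u 0 c); [lra | exact Hr |].
    apply (deriv_ge_slope u du); intros x Hx; [apply Hdu | apply du_noninc]; lra. }
  assert (u_noninc : forall s t, 0 <= s -> s <= t -> t <= T -> u t <= u s).
  { apply nonincreasing_Icc_of_Ioo; auto.
    apply (nonincreasing_of_deriv_nonpos u du); auto. }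
  assert (HuT0 : 0 <= u T).
  { assert (Hint : (eta - 0) * u T <= RInt u 0 eta).
    { apply RInt_ge_const; [lra | |].
      - apply (ex_RInt_Chasles_1 u 0 eta T); [lra |].
        apply ex_RInt_cont_on_Icc; [lra | exact Hu].
      - intros x Hx; apply u_noninc; lra. }
    assert (Hae : alpha * eta < 1).
    { replace 1 with (1 / eta * eta) by (field; lra).
      apply Rmult_lt_compat_r; lra. }
    nra. }
  intros t Ht; specialize (u_noninc t T); lra.
Qed.
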